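(* Let $(L,\vee,\wedge,\to,\gets,f,g,0,1)$ be a complete and weakly atomic HBGC-algebra. Then there exists a GC-frame $\mathcal{F}=(X,\leq,R)$ such that $(L,\vee,\wedge,\to,\gets,f,g,0,1)$ is isomorphic to the complex algebra $\mathbb{HB}_{\rm GC}(\mathcal{F})=(\mathcal{T}_\leq,\cup,\cap,\to,\gets,{}^\blacktriangle,{}^\blacktriangledown,\emptyset,X)$.
   Context: A Heyting–Brouwer algebra $(L,\vee,\wedge,\to,\gets,0,1)$ is a bounded lattice in which for all $a,b$ the relative pseudocomplement $a\to b$ (greatest $x$ with $a\wedge x\leq b$) exists and the co-implication $a\gets b$ (least $x$ with $b\leq a\vee x$) exists. A pair $(f,g)$ of maps $L\to L$ is an (order-preserving) Galois connection if $f(a)\leq b\iff a\leq g(b)$ for all $a,b\in L$. An HBGC-algebra is a Heyting–Brouwer algebra equipped with an order-preserving Galois connection $(f,g)$ on $L$; it is complete if its underlying lattice is complete, and weakly atomic if its underlying lattice is weakly atomic, i.e. whenever $x<y$ there exist $a,b$ with $x\leq a\prec b\leq y$, where $\prec$ is the covering relation. A GC-frame $(X,\leq,R)$ is a set $X$ with a quasiorder $\leq$ and a relation $R\subseteq X\times X$ such that $x\leq x'$, $x\,R\,y$, $y'\leq y$ imply $x'\,R\,y'$. $\mathcal{T}_\leq$ is the set of upward $\leq$-closed subsets of $X$. For $A\subseteq X$: $A^\blacktriangle=\{x\mid x\,R\,y\text{ for some }y\in A\}$, $A^\blacktriangledown=\{x\mid y\,R\,x\text{ implies }y\in A\}$.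 On $\mathcal{T}_\leq$: $A\to B=\{a\in X\mid \forall b\geq a\,(b\in A\Rightarrow b\in B)\}$ and $A\gets B=\{a\in X\mid \exists b\leq a\,(b\notin A\text{ and }b\in B)\}$. Isomorphism is with respect to all operations $\vee,\wedge,\to,\gets,f,g,0,1$ ($f\leftrightarrow{}^\blacktriangle$, $g\leftrightarrow{}^\blacktriangledown$). *)

Set Implicit Arguments.

Section HBGC.
Variable L : Type.
Variable le : L -> L -> Prop.
Variables (join meet imp coimp : L -> L -> L) (bot top : L) (f g : L -> L).

Definition lt (x y : L) : Prop := le x y /\ x <> y.

Definition is_bounded_lattice : Prop :=
  (forall x, le x x) /\
  (forall x y, le x y -> le y x -> x = y) /\
  (forall x y z, le x y -> le y z -> le x z) /\
  (forall x y z, le (join x y) z <-> (le x z /\ le y z)) /\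
  (forall x y z, le z (meet x y) <-> (le z x /\ le z y)) /\
  (forall x, le bot x) /\
  (forall x, le x top).

Definition is_HB_algebra : Prop :=
  is_bounded_lattice /\
  (forall a b x, le (meet a x) b <-> le x (imp a b)) /\
  (forall a b x, le b (join a x) <-> le (coimp a b) x).

Definition is_galois_connection : Prop :=
  forall a b, le (f a) b <-> le a (g b).

Definition is_HBGC_algebra : Prop := is_HB_algebra /\ is_galois_connection.

(** completeness: every subset has a least upper bound
    (hence also a greatest lower bound). *)
Definition is_lub (S : L -> Prop) (s : L) : Prop :=
  (forall x, S x -> le x s) /\ (forall u, (forall x, S x -> le x u) -> le s u).

Definition is_complete : Prop := forall S : L -> Prop, exists s, is_lub S s.

Definition covers (a b : L) : Prop :=
  lt a b /\ forall z, le a z -> le z b -> z = a \/ z = b.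

Definition is_weakly_atomic : Prop :=
  forall x y, lt x y -> exists a b, le x a /\ covers a b /\ le b y.

End HBGC.

Section Frames.
Variable X : Type.
Variable leX : X -> X -> Prop.
Variable R : X -> X -> Prop.

Definition is_quasiorder : Prop :=
  (forall x, leX x x) /\ (forall x y z, leX x y -> leX y z -> leX x z).

Definition is_GC_frame : Prop :=
  is_quasiorder /\
  (forall x x' y y', leX x x' -> R x y -> leX y' y -> R x' y').

Definition upset (A : X -> Prop) : Prop := forall x y, A x -> leX x y -> A y.

Definition set_eq (A B : X -> Prop) : Prop := forall x, A x <-> B x.

Definition setU (A B : X -> Prop) : X -> Prop := fun x => A x \/ B x.
Definition setI (A B : X -> Prop) : X -> Prop := fun x => A x /\ B x.
Definition set0 : X -> Prop := fun _ => False.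
Definition setT : X -> Prop := fun _ => True.

Definition up_imp (A B : X -> Prop) : X -> Prop :=
  fun a => forall b, leX a b -> A b -> B b.

Definition up_coimp (A B : X -> Prop) : X -> Prop :=
  fun a => exists b, leX b a /\ ~ A b /\ B b.

Definition blacktriangle (A : X -> Prop) : X -> Prop :=
  fun x => exists y, R x y /\ A y.

Definition blacktriangledown (A : X -> Prop) : X -> Prop :=
  fun x => forall y, R y x -> A y.

End Frames.

(** An isomorphism from the algebra L onto the complex algebra
    HB_GC(X, leX, R) = (T_<=, ∪, ∩, →, ←, ▲, ▼, ∅, X):
    a map phi into the up-sets that is bijective onto T_<=
    (sets compared extensionally) and preserves all operations. *)
Definition is_iso_to_complex_algebra
  (L : Type) (join meet imp coimp : L -> L -> L) (bot top : L) (f g : L -> L)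
  (X : Type) (leX R : X -> X -> Prop) (phi : L -> X -> Prop) : Prop :=
  (forall a, upset (X:=X) leX (phi a)) /\
  (forall a b, set_eq (phi a) (phi b) -> a = b) /\
  (forall A, upset (X:=X) leX A -> exists a, set_eq (phi a) A) /\
  (forall a b, set_eq (phi (join a b)) (setU (phi a) (phi b))) /\
  (forall a b, set_eq (phi (meet a b)) (setI (phi a) (phi b))) /\
  (forall a b, set_eq (phi (imp a b)) (up_imp (X:=X) leX (phi a) (phi b))) /\
  (forall a b, set_eq (phi (coimp a b)) (up_coimp (X:=X) leX (phi a) (phi b))) /\
  (forall a, set_eq (phi (f a)) (blacktriangle (X:=X) R (phi a))) /\
  (forall a, set_eq (phi (g a)) (blacktriangledown (X:=X) R (phi a))) /\
  set_eq (phi bot) (@set0 X) /\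
  set_eq (phi top) (@setT X).

From Stdlib Require Import Classical.

(* The points of the frame are the completely join-prime elements of L, ordered
   by the dual order, with [j R k] iff [j <= f k]; [a] is sent to the set of
   completely join-prime elements below it.  Weak atomicity produces enough of
   them: if [c] is covered by [d], then [coimp c d] is completely join-prime
   (meets distribute over arbitrary joins because L is a Heyting algebra), so
   every element is the join of the completely join-prime elements below it.  Each operation is then recovered pointwise from prime-ness and
   the residuation laws of [->], [<-] and of the Galois connection. *)

Set Implicit Arguments.

Section JoinPrimes.

Variables (L : Type) (le : L -> L -> Prop).
Variables (join meet imp coimp : L -> L -> L) (bot top : L).

Hypothesis Hlat : is_bounded_lattice le join meet bot top.
Hypothesis Himp : forall a b x, le (meet a x) b <-> le x (imp a b).
Hypothesis Hcoimp : forall a b x, le b (join a x) <-> le (coimp a b) x.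

Lemma le_refl x : le x x.
Proof. destruct Hlat as [H _]; apply H. Qed.

Lemma le_antisym x y : le x y -> le y x -> x = y.
Proof. destruct Hlat as [_ [H _]]; apply H. Qed.

Lemma le_trans x y z : le x y -> le y z -> le x z.
Proof. destruct Hlat as [_ [_ [H _]]]; apply H. Qed.

Lemma join_le_iff x y z : le (join x y) z <-> le x z /\ le y z.
Proof. destruct Hlat as [_ [_ [_ [H _]]]]; apply H. Qed.

Lemma le_meet_iff x y z : le z (meet x y) <-> le z x /\ le z y.
Proof. destruct Hlat as [_ [_ [_ [_ [H _]]]]]; apply H. Qed.

Lemma le_join_l x y : le x (join x y).
Proof. apply (join_le_iff x y); apply le_refl. Qed.

Lemma le_join_r x y : le y (join x y).
Proof. apply (join_le_iff x y); apply le_refl. Qed.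

Lemma meet_le_l x y : le (meet x y) x.
Proof. apply (le_meet_iff x y); apply le_refl. Qed.

Lemma meet_le_r x y : le (meet x y) y.
Proof. apply (le_meet_iff x y); apply le_refl. Qed.

Lemma le_top x : le x top.
Proof. destruct Hlat as [_ [_ [_ [_ [_ [_ H]]]]]]; apply H. Qed.

Lemma le_bot_lub : is_lub le (fun _ => False) bot.
Proof.
  destruct Hlat as [_ [_ [_ [_ [_ [H _]]]]]].
  split; [tauto | intros u _; apply H].
Qed.

Lemma join_is_lub x y : is_lub le (fun z => z = x \/ z = y) (join x y).
Proof.
  split.
  - intros z [-> | ->]; [apply le_join_l | apply le_join_r].
  - intros u Hu; apply join_le_iff; auto.
Qed.

Definition completely_join_prime (j : L) : Prop :=
  forall S s, is_lub le S s -> le j s -> exists x, S x /\ le j x.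

Lemma join_prime_le_join j x y :
  completely_join_prime j -> (le j (join x y) <-> le j x \/ le j y).
Proof.
  intros Hj; split.
  - intros H. destruct (Hj _ _ (join_is_lub x y) H) as [z [[-> | ->] Hz]]; auto.
  - intros [H | H]; eapply le_trans; eauto using le_join_l, le_join_r.
Qed.

Lemma join_prime_not_le_bot j : completely_join_prime j -> ~ le j bot.
Proof. intros Hj H. destruct (Hj _ _ le_bot_lub H) as [x [[] _]]. Qed.

Section CoveringPair.

Variables c d : L.
Hypothesis Hcd : covers le c d.

Lemma coimp_cover_le : le (coimp c d) d.
Proof. apply Hcoimp, le_join_r. Qed.

Lemma coimp_cover_not_le : ~ le (coimp c d) c.
Proof.
  destruct Hcd as [[Hcd_le Hcd_neq] _]. intros H. apply Hcd_neq.
  apply le_antisym; [exact Hcd_le|].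
  apply le_trans with (join c (coimp c d)).
  - apply Hcoimp, le_refl.
  - apply join_le_iff; split; [apply le_refl | exact H].
Qed.

(* If [coimp c d] lies below a join but meets none of the joinands outside [c],
   every joinand lies below [imp (coimp c d) c]; otherwise some
   [c \/ (coimp c d /\ x)] is strictly above [c], hence equals [d]. *)
Lemma coimp_cover_join_prime : completely_join_prime (coimp c d).
Proof.
  set (k := coimp c d). destruct Hcd as [[Hcd_le _] Hcov].
  intros S s [Hub Hleast] Hks.
  destruct (classic (exists x, S x /\ ~ le (meet k x) c)) as [[x [Sx Hx]] | Hall].
  - exists x; split; [exact Sx|].
    assert (Hmid : le (join c (meet k x)) d).
    { apply join_le_iff; split; [exact Hcd_le|].
      apply le_trans with k; [apply meet_le_l | apply coimp_cover_le]. }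
    destruct (Hcov _ (le_join_l c (meet k x)) Hmid) as [E | E].
    + exfalso. apply Hx. rewrite <- E. apply le_join_r.
    + apply le_trans with (meet k x); [|apply meet_le_r].
      apply Hcoimp. rewrite E. apply le_refl.
  - exfalso. apply coimp_cover_not_le.
    assert (Hs : le s (imp k c)).
    { apply Hleast. intros x Sx. apply Himp.
      apply NNPP. intros H. apply Hall. eauto. }
    apply le_trans with (meet k k); [apply le_meet_iff; split; apply le_refl|].
    apply Himp, le_trans with s; assumption.
Qed.

End CoveringPair.

Lemma join_primes_dense :
  is_complete le -> is_weakly_atomic le ->
  forall a, is_lub le (fun j => completely_join_prime j /\ le j a) a.
Proof.
  intros Hcomplete Hwa a.
  destruct (Hcomplete (fun j => completely_join_prime j /\ le j a)) as [s [Hub Hleast]].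
  assert (Hsa : le s a) by (apply Hleast; tauto).
  enough (s = a) by (subst s; split; assumption).
  apply NNPP. intros Hneq.
  destruct (Hwa s a (conj Hsa Hneq)) as [c [d [Hsc [Hcd Hda]]]].
  apply (coimp_cover_not_le Hcd).
  apply le_trans with s; [|exact Hsc].
  apply Hub. split; [exact (coimp_cover_join_prime Hcd)|].
  apply le_trans with d; [exact (coimp_cover_le c d) | exact Hda].
Qed.

Section Representation.

Variables f g : L -> L.
Hypothesis Hgc : is_galois_connection le f g.
Hypothesis Hcomplete : is_complete le.
Hypothesis Hdense :
  forall a, is_lub le (fun j => completely_join_prime j /\ le j a) a.

Lemma f_monotone a b : le a b -> le (f a) (f b).
Proof. intros H. apply Hgc, le_trans with b; [exact H | apply Hgc, le_refl]. Qed.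

Lemma le_of_join_primes_below a b :
  (forall j, completely_join_prime j -> le j a -> le j b) -> le a b.
Proof. intros H. apply (Hdense a). intros j [Hj Hja]. auto. Qed.

Lemma join_prime_le_imp j a b :
  le j (imp a b) <->
  forall k, completely_join_prime k -> le k j -> le k a -> le k b.
Proof.
  split.
  - intros H k _ Hkj Hka. apply le_trans with (meet a (imp a b)).
    + apply le_meet_iff; split; [exact Hka | apply le_trans with j; assumption].
    + apply Himp, le_refl.
  - intros H. apply Himp, le_of_join_primes_below. intros k Hk Hkm.
    apply H; [exact Hk | |]; apply le_trans with (meet a j);
      auto using meet_le_l, meet_le_r.
Qed.

(* The witness comes from primality of [j] against the join of all completely
   join-prime [k <= b] with [~ k <= a], which completes [a] above [b]. *)
Lemma join_prime_le_coimp j a b :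
  completely_join_prime j ->
  (le j (coimp a b) <->
   exists k, completely_join_prime k /\ le j k /\ ~ le k a /\ le k b).
Proof.
  intros Hj; split.
  - intros H.
    destruct (Hcomplete (fun k => completely_join_prime k /\ le k b /\ ~ le k a))
      as [c Hc].
    assert (Hbac : le b (join a c)).
    { apply le_of_join_primes_below. intros k Hk Hkb.
      destruct (classic (le k a)) as [Hka | Hka].
      - apply le_trans with a; [exact Hka | apply le_join_l].
      - apply le_trans with c; [apply Hc; auto | apply le_join_r]. }
    destruct (Hj _ _ Hc (le_trans H (proj1 (Hcoimp a b c) Hbac)))
      as [k [[Hk [Hkb Hka]] Hjk]].
    exists k; auto.
  - intros [k [Hk [Hjk [Hka Hkb]]]]. apply le_trans with k; [exact Hjk|].
    assert (Hkj : le k (join a (coimp a b)))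
      by (apply le_trans with b; [exact Hkb | apply Hcoimp, le_refl]).
    apply (join_prime_le_join a (coimp a b) Hk) in Hkj. tauto.
Qed.

Lemma join_prime_le_f j a :
  completely_join_prime j ->
  (le j (f a) <-> exists k, completely_join_prime k /\ le j (f k) /\ le k a).
Proof.
  intros Hj; split.
  - intros H.
    destruct (Hcomplete (fun y => exists k,
                (completely_join_prime k /\ le k a) /\ y = f k)) as [u Hu].
    assert (Hfa : le (f a) u).
    { apply Hgc, le_of_join_primes_below. intros k Hk Hka.
      apply Hgc, Hu. eauto. }
    destruct (Hj _ _ Hu (le_trans H Hfa)) as [y [[k [[Hk Hka] ->]] Hjy]].
    eauto.
  - intros [k [_ [Hjk Hka]]]. apply le_trans with (f k); auto using f_monotone.
Qed.

Lemma join_prime_le_g j a :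
  le j (g a) <-> forall k, completely_join_prime k -> le k (f j) -> le k a.
Proof.
  split.
  - intros H k _ Hk. apply le_trans with (f j); [exact Hk | apply Hgc, H].
  - intros H. apply Hgc, le_of_join_primes_below. exact H.
Qed.

Lemma join_prime_downset_represented (A : L -> Prop) :
  (forall j k, completely_join_prime k -> A j -> le k j -> A k) ->
  exists a, forall j, completely_join_prime j -> (le j a <-> A j).
Proof.
  intros Hdown.
  destruct (Hcomplete (fun j => completely_join_prime j /\ A j)) as [a Ha].
  exists a. intros j Hj; split.
  - intros H. destruct (Hj _ _ Ha H) as [k [[_ Ak] Hjk]]. eauto.
  - intros Aj. apply Ha. auto.
Qed.

Definition join_prime_point : Type := {j : L | completely_join_prime j}.

(* Reversed so that the images [join_prime_below a], which are down-sets of L,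
   become up-sets of the frame. *)
Definition join_prime_order (x y : join_prime_point) : Prop :=
  le (proj1_sig y) (proj1_sig x).

Definition join_prime_rel (x y : join_prime_point) : Prop :=
  le (proj1_sig x) (f (proj1_sig y)).

Definition join_prime_below (a : L) (x : join_prime_point) : Prop :=
  le (proj1_sig x) a.

Lemma join_prime_frame_GC : is_GC_frame join_prime_order join_prime_rel.
Proof.
  unfold join_prime_order, join_prime_rel.
  split; [split|].
  - intros x. apply le_refl.
  - intros x y z Hxy Hyz. apply le_trans with (proj1_sig y); assumption.
  - intros x x' y y' Hx Hxy Hy. apply le_trans with (proj1_sig x); [exact Hx|].
    apply le_trans with (f (proj1_sig y)); auto using f_monotone.
Qed.

Lemma join_prime_below_iso :
  is_iso_to_complex_algebra join meet imp coimp bot top f g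
    join_prime_order join_prime_rel join_prime_below.
Proof.
  unfold is_iso_to_complex_algebra, upset, set_eq, setU, setI, up_imp, up_coimp,
    blacktriangle, blacktriangledown, set0, setT,
    join_prime_below, join_prime_order, join_prime_rel.
  repeat match goal with |- _ /\ _ => split end.
  - intros a x y Hx Hy. apply le_trans with (proj1_sig x); assumption.
  - intros a b H. apply le_antisym; apply le_of_join_primes_below;
      intros j Hj; apply (H (exist _ j Hj)).
  - intros A HA.
    destruct (join_prime_downset_represented
                (fun j => exists Hj, A (exist _ j Hj))) as [a Ha].
    { intros j k Hk [Hj Aj] Hkj. exists Hk. exact (HA _ (exist _ k Hk) Aj Hkj). }
    exists a. intros [j Hj]; simpl. rewrite (Ha j Hj). split; eauto.
    intros [Hj' Aj]. exact (HA _ (exist _ j Hj) Aj (le_refl j)).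
  - intros a b [j Hj]. exact (join_prime_le_join a b Hj).
  - intros a b x. apply le_meet_iff.
  - intros a b [j Hj]; simpl. rewrite (join_prime_le_imp j a b). split.
    + intros H [k Hk]; apply H; exact Hk.
    + intros H k Hk; exact (H (exist _ k Hk)).
  - intros a b [j Hj]; simpl. rewrite (join_prime_le_coimp a b Hj). split.
    + intros [k [Hk Hks]]. exists (exist _ k Hk). exact Hks.
    + intros [[k Hk] Hks]. eauto.
  - intros a [j Hj]; simpl. rewrite (join_prime_le_f a Hj). split.
    + intros [k [Hk Hks]]. exists (exist _ k Hk). exact Hks.
    + intros [[k Hk] Hks]. eauto.
  - intros a [j Hj]; simpl. rewrite (join_prime_le_g j a). split.
    + intros H [k Hk]; apply H; exact Hk.
    + intros H k Hk; exact (H (exist _ k Hk)).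
  - intros [j Hj]; simpl. split; [apply join_prime_not_le_bot; exact Hj | tauto].
  - intros [j Hj]; simpl. split; [tauto|].
    intros _. apply le_top.
Qed.

End Representation.

End JoinPrimes.

Theorem theorem4p4
  (L : Type) (le : L -> L -> Prop)
  (join meet imp coimp : L -> L -> L) (bot top : L) (f g : L -> L)
  (HL : is_HBGC_algebra le join meet imp coimp bot top f g)
  (Hcomplete : is_complete le)
  (Hwa : is_weakly_atomic le) :
  exists (X : Type) (leX R : X -> X -> Prop),
    is_GC_frame leX R /\
    exists phi : L -> X -> Prop,
      is_iso_to_complex_algebra join meet imp coimp bot top f g leX R phi.
Proof.
  destruct HL as [[Hlat [Himp Hcoimp]] Hgc].
  pose proof (join_primes_dense imp coimp Hlat Himp Hcoimp Hcomplete Hwa) as Hdense.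
  exists (join_prime_point le), (@join_prime_order L le), (join_prime_rel f).
  split.
  - exact (join_prime_frame_GC Hlat Hgc).
  - exists (@join_prime_below L le).
    exact (join_prime_below_iso imp coimp Hlat Himp Hcoimp Hgc Hcomplete Hdense).
Qed.
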